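(* Let $N$ be a positive integer and $G = \mathbb{Z}/N\mathbb{Z}$. Then for $1 \leq r \leq N$, \[\rho_G^-(r) = \min_{d \in D(N)} d \left( 2\left\lceil\frac{r}{d}\right\rceil - 1\right),\] where $D(N)$ denotes the set of positive divisors of $N$.
   Context: For a finite abelian group $(G,+)$ of order $N$ and subsets $A, B \subseteq G$, write $A - B = \{a - b \mid a \in A, b \in B\}$. For $1 \le r \le N$ define $\rho^-_G(r) = \min \{|A - A| \mid A \subseteq G, |A| = r\}$. *)

From mathcomp Require Import all_boot all_order all_algebra.
Set Implicit Arguments. Unset Strict Implicit. Unset Printing Implicit Defensive.
Import GRing.Theory.

Definition diffset (G : finZmodType) (A B : {set G}) : {set G} :=
  [set (a - b)%R | a in A, b in B].

(* rho^-_G(r) = min { |A - A| : A subset of G, |A| = r }.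
   The default value #|G| of the fold is irrelevant for 1 <= r <= #|G|
   (the index set is nonempty and every |A - A| <= #|G|). *)
Definition rho_minus (G : finZmodType) (r : nat) : nat :=
  \big[minn/#|G|]_(A : {set G} | #|A| == r) #|diffset A A|.

Definition ceil_div (r d : nat) : nat := (r + d.-1) %/ d.

From mathcomp Require Import all_boot all_order all_algebra.
From mathcomp Require Import zify.
Set Implicit Arguments. Unset Strict Implicit. Unset Printing Implicit Defensive.
Import Order.TTheory GRing.Theory.

(* Upper bound: for d | N and k = ceil(r/d), a set A of size r inside H + {0, ..., k-1},
   where H is the subgroup of order d, has A - A inside H + {-(k-1), ..., k-1}.
   Lower bound: let H be the stabilizer of C = A - A.  Then C = (A + H) + (-A + H), and
   Kneser's theorem |X| + |Y| <= |X + Y| + |stab (X + Y)| for X = A + H and Y = -A + H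
   gives |C| >= |A + H| + |-A + H| - |H|; both sets are unions of H-cosets with at least
   r elements, hence have at least |H| ceil(r/|H|) elements, and |H| divides N.
   Kneser's theorem is proved by induction on |B| with Dyson's e-transform; the key
   step is that |C| + |stab C| of a union of nonempty sets C1, C2 is at least the
   smaller of the two values for C1 and C2. *)

Lemma leq_ceil_divLR d r q : 0 < d -> (ceil_div r d <= q) = (r <= q * d).
Proof. by move=> d_gt0; rewrite /ceil_div -ltnS ltn_divLR //; apply/idP/idP; lia. Qed.

Lemma ceil_div_mul_leq d r x : 0 < d -> d %| x -> r <= x -> ceil_div r d * d <= x.
Proof. by move=> d_gt0 /dvdnP[q ->] rx; rewrite leq_mul2r leq_ceil_divLR // rx orbT. Qed.

Lemma ltn_of_mul_le m P a b : m <= P -> m <= a -> P * a < m * (P + b - m) -> a < b.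
Proof.
move=> mP ma lt_Pa; rewrite ltnNge; apply/negP => ba.
have : m * (P + b - m) <= m * (P + a - m) by rewrite leq_mul2l; lia.
have : m * (P + a - m) <= P * a by nia.
lia.
Qed.

(* In [card_stab_lt] below, (m, P, Q, h1, h2, X1, X2) stand for the sizes of
   H1 :&: H2, P, Q, H1, H2, C1 :\: C2 and C2 :\: C1. *)
Lemma card_stab_arith m P Q h1 h2 X1 X2 :
  0 < m -> m <= P <= h2 -> Q + m <= h1 -> (Q = 0 \/ m <= Q) ->
  P * (h1 - Q) <= m * X1 -> Q * (h2 - P) <= m * X2 ->
  X1 + m < h2 -> X2 + m < h1 -> h1 < h2.
Proof.
move=> m_gt0 /andP[mP Ph2] Qh1 [-> | mQ] D1 D2 E1 E2; first by nia.
have lt1 : h1 - Q < h2 - P.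
  apply: (ltn_of_mul_le mP); first lia.
  by apply: (leq_ltn_trans D1); rewrite ltn_pmul2l //; lia.
have lt2 : h2 - P < h1 - Q.
  apply: (ltn_of_mul_le mQ); first lia.
  by apply: (leq_ltn_trans D2); rewrite ltn_pmul2l //; lia.
lia.
Qed.

Section Sumsets.
Variable G : finZmodType.
Implicit Types (A B C X : {set G}) (g h x : G).

Definition sumset A B : {set G} := [set (a + b)%R | a in A, b in B].

(* Locked so that [inE] does not unfold membership in a stabilizer. *)
Definition stab C : {set G} := locked [set g | [forall x in C, (x + g)%R \in C]].

Lemma stabP C g : reflect {in C, forall x, (x + g)%R \in C} (g \in stab C).
Proof. by rewrite /stab -lock inE; apply: forall_inP. Qed.

Lemma stabPn C g : reflect (exists2 x, x \in C & (x + g)%R \notin C) (g \notin stab C).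
Proof. by rewrite /stab -lock inE negb_forall_in; apply: exists_inP. Qed.

Lemma stab0 C : 0%R \in stab C.
Proof. by apply/stabP => x; rewrite addr0. Qed.

Lemma stabD C g h : g \in stab C -> h \in stab C -> (g + h)%R \in stab C.
Proof. by move=> /stabP Cg /stabP Ch; apply/stabP => x xC; rewrite addrA Ch ?Cg. Qed.

Lemma stab_translate C g : g \in stab C -> [set (x + g)%R | x in C] = C.
Proof.
move=> /stabP Cg; apply/eqP; rewrite eqEcard card_imset; last exact: addIr.
by rewrite leqnn andbT; apply/subsetP => _ /imsetP[x xC ->]; apply: Cg.
Qed.

Lemma stab_addr C g x : g \in stab C -> ((x + g)%R \in C) = (x \in C).
Proof. by move=> Cg; rewrite -{1}(stab_translate Cg) (mem_imset _ _ (addIr g)). Qed.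

Lemma stabN C g : g \in stab C -> (- g)%R \in stab C.
Proof. by move=> Cg; apply/stabP => x xC; rewrite -(stab_addr _ Cg) subrK. Qed.

Lemma stabB C g h : g \in stab C -> h \in stab C -> (g - h)%R \in stab C.
Proof. by move=> Cg Ch; rewrite stabD ?stabN. Qed.

Lemma stab_stab C : stab C \subset stab (stab C).
Proof. by apply/subsetP => g Cg; apply/stabP => h Ch; apply: stabD. Qed.

Lemma sumsetC A B : sumset A B = sumset B A.
Proof.
by apply/setP => x; apply/imset2P/imset2P => -[a b aA bB ->]; exists b a; rewrite // addrC.
Qed.

Lemma stab_sumsetr A B : stab B \subset stab (sumset A B).
Proof.
apply/subsetP => g /stabP Bg; apply/stabP => _ /imset2P[a b aA bB ->].
by rewrite -addrA; apply: imset2_f; rewrite ?Bg.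
Qed.

Lemma stab_sumsetl A B : stab A \subset stab (sumset A B).
Proof. by rewrite sumsetC stab_sumsetr. Qed.

Lemma sumset_neq0 A B : A != set0 -> B != set0 -> sumset A B != set0.
Proof.
by case/set0Pn => a aA /set0Pn[b bB]; apply/set0Pn; exists (a + b)%R; apply: imset2_f.
Qed.

Lemma leq_card_sumsetl A B b : b \in B -> #|A| <= #|sumset A B|.
Proof.
move=> bB; rewrite -(card_imset _ (addIr b)); apply/subset_leq_card/subsetP.
by move=> _ /imsetP[a aA ->]; apply: imset2_f.
Qed.

Lemma card_sumset_le A B : #|sumset A B| <= #|A| * #|B|.
Proof. by rewrite /sumset curry_imset2X -cardsX leq_imset_card. Qed.

Lemma leq_card_stab C X x : x \in X -> C \subset stab X -> #|C| <= #|X|.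
Proof.
move=> xX /subsetP CX; rewrite -(card_imset _ (addrI x)); apply/subset_leq_card/subsetP.
by move=> _ /imsetP[c cC ->]; apply/(stabP _ _ (CX c cC)).
Qed.

Lemma dvdn_stab C X : stab C \subset stab X -> #|stab C| %| #|X|.
Proof.
move=> sCX; have [n] := ubnP #|X|; elim: n => // n IHn in X sCX *; rewrite ltnS => leXn.
have [->|[x xX]] := set_0Vmem X; first by rewrite cards0 dvdn0.
set Y := [set (x + h)%R | h in stab C].
have YX : Y \subset X.
  by apply/subsetP => _ /imsetP[h Ch ->]; apply: (stabP _ _ (subsetP sCX h Ch)).
have cardY : #|Y| = #|stab C| by apply: card_imset; apply: addrI.
rewrite -(subnK (subset_leq_card YX)) -cardsDS // cardY dvdn_add ?dvdnn // IHn //.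
- apply/subsetP => h Ch; apply/stabP => z; rewrite !inE => /andP[zY zX].
  rewrite (stabP _ _ (subsetP sCX h Ch)) // andbT.
  apply: contra zY => /imsetP[h' Ch' eq_z]; apply/imsetP; exists (h' - h)%R.
    by rewrite stabB.
  by rewrite addrA -eq_z addrK.
- apply: leq_trans leXn; rewrite cardsDS // cardY ltn_subrL.
  by apply/andP; split; apply/card_gt0P; [exists 0%R; apply: stab0 | exists x].
Qed.

Lemma dvdn_stab_card C : #|stab C| %| #|G|.
Proof. by rewrite -cardsT dvdn_stab //; apply/subsetP => g _; apply/stabP => x _; rewrite inE. Qed.

Lemma diffsetS A B : A \subset B -> diffset A A \subset diffset B B.
Proof. by move=> AB; apply: imset2S. Qed.

Lemma diffset_sumset A B :
  diffset (sumset A B) (sumset A B) \subset sumset (diffset A A) (diffset B B).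
Proof.
apply/subsetP => _ /imset2P[_ _ /imset2P[a b aA bB ->] /imset2P[a' b' a'A b'B ->] ->].
by rewrite opprD addrACA; apply: imset2_f; apply: imset2_f.
Qed.

Definition progression h n : {set G} := [set (h *+ i)%R | i : 'I_n].

Lemma card_progression_le h n : #|progression h n| <= n.
Proof. by rewrite -[n in _ <= n]card_ord leq_imset_card. Qed.

Lemma mulrn_modn h d i : (h *+ d = 0)%R -> (h *+ i = h *+ (i %% d))%R.
Proof.
by move=> hd0; rewrite {1}(divn_eq i d) mulrnDr mulnC mulrnA hd0 mul0rn add0r.
Qed.

Lemma diffset_progression_cyclic h d : (h *+ d = 0)%R ->
  diffset (progression h d) (progression h d) \subset progression h d.
Proof.
move=> hd0; apply/subsetP => _ /imset2P[_ _ /imsetP[i _ ->] /imsetP[j _ ->] ->].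
have d_gt0 : 0 < d := leq_ltn_trans (leq0n i) (ltn_ord i).
have -> : (h *+ i - h *+ j = h *+ ((i + (d - j)) %% d))%R.
  rewrite -mulrn_modn // mulrnDr; congr (_ + _)%R.
  by rewrite -[in RHS](addrK (h *+ j) (h *+ (d - j)))%R -mulrnDr subnK ?hd0 ?sub0r // ltnW.
by apply/imsetP; exists (Ordinal (ltn_pmod (i + (d - j)) d_gt0)).
Qed.

Lemma diffset_progression h k : diffset (progression h k) (progression h k) \subset
  sumset (progression h (2 * k - 1)) [set (- (h *+ k.-1))%R].
Proof.
apply/subsetP => _ /imset2P[_ _ /imsetP[i _ ->] /imsetP[j _ ->] ->].
have lt_ij : i + (k.-1 - j) < 2 * k - 1 by have := ltn_ord i; have := ltn_ord j; lia.
apply/imset2P; exists (h *+ (i + (k.-1 - j)))%R (- (h *+ k.-1))%R; rewrite ?inE //.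
  by apply/imsetP; exists (Ordinal lt_ij).
have jk : j <= k.-1 by have := ltn_ord j; lia.
by rewrite -{2}(subnK jk) !mulrnDr opprD addrA addrK.
Qed.

End Sumsets.

Section Kneser.
Variable G : finZmodType.
Implicit Types (A B C U V X Y : {set G}) (g h x y : G).

Lemma card_sum_fiber U V z :
  #|[set p in setX U V | (p.1 + p.2 == z)%R]| <= #|diffset U U :&: diffset V V|.
Proof.
set F := [set p in _ | _].
have [->|[p0 p0F]] := set_0Vmem F; first by rewrite cards0.
have inj : {in F &, injective (fun p : G * G => (p.1 - p0.1)%R)}.
  move=> [a b] [c d]; rewrite !inE /= => /andP[_ /eqP abz] /andP[_ /eqP cdz] /addIr ac.
  by rewrite ac in abz *; rewrite (addrI _ (etrans abz (esym cdz))).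
rewrite -(card_in_imset inj); apply/subset_leq_card/subsetP => _ /imsetP[[a b] pF ->].
move: pF p0F; rewrite !inE /= => /andP[/andP[aU bV] /eqP abz] /andP[/andP[a0U b0V] /eqP abz0].
rewrite [_ \in diffset U U]imset2_f //=.
have -> : (a - p0.1 = p0.2 - b)%R.
  by apply/eqP; rewrite subr_eq addrAC (addrC p0.2) abz0 -abz addrK.
exact: imset2_f.
Qed.

Lemma card_setX_le_sumset U V :
  #|U| * #|V| <= #|diffset U U :&: diffset V V| * #|sumset U V|.
Proof.
rewrite -cardsX -sum1_card.
rewrite (partition_big (fun p : G * G => (p.1 + p.2)%R) (mem (sumset U V))) /=; last first.
  by move=> [a b] /setXP[aU bV]; apply: imset2_f.
rewrite mulnC -sum_nat_const; apply: leq_sum => z _; rewrite sum1dep_card.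
by apply: leq_trans (card_sum_fiber U V z); apply/subset_leq_card/subsetP => p; rewrite !inE.
Qed.

(* The sums p + h, p in P and h in stab C1 :\: Q, are translated by y into C1 :\: C2. *)
Section Offsets.
Variables (C1 C2 : {set G}) (y : G).
Let P := [set h in stab C2 | (y + h)%R \in C1].
Let Q := [set h in stab C1 | (y + h)%R \in C2].

Lemma card_offsets_mul_le :
  #|P| * (#|stab C1| - #|Q|) <= #|stab C1 :&: stab C2| * #|C1 :\: C2|.
Proof.
have QC1 : Q \subset stab C1 by apply/subsetP => h; rewrite inE => /andP[].
rewrite -cardsDS //; apply: leq_trans (card_setX_le_sumset P (stab C1 :\: Q)) _.
apply: leq_mul.
  apply/subset_leq_card/subsetP => _ /setIP[/imset2P[u u' + + ->] /imset2P[v v' + + e]].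
  rewrite !inE {1}e => /andP[uC2 _] /andP[u'C2 _] /andP[_ vC1] /andP[_ v'C1].
  by rewrite !stabB.
rewrite -(card_imset _ (addrI y)); apply/subset_leq_card/subsetP.
move=> _ /imsetP[_ /imset2P[u v + + ->] ->]; rewrite !inE => /andP[uC2 yuC1] /andP[vQ vC1].
rewrite addrA (stab_addr _ vC1) yuC1 andbT addrAC (stab_addr _ uC2).
by move: vQ; rewrite vC1.
Qed.
End Offsets.

Lemma card_stab_lt C1 C2 y : y \in C1 -> y \notin C2 ->
  #|C1 :\: C2| + #|stab C1 :&: stab C2| < #|stab C2| ->
  #|C2 :\: C1| + #|stab C1 :&: stab C2| < #|stab C1| ->
  #|stab C1| < #|stab C2|.
Proof.
move=> yC1 yC2; set M := stab C1 :&: stab C2.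
set P := [set h in stab C2 | (y + h)%R \in C1].
set Q := [set h in stab C1 | (y + h)%R \in C2].
have M_gt0 : 0 < #|M| by apply/card_gt0P; exists 0%R; rewrite inE !stab0.
have MP : M \subset P.
  by apply/subsetP => h /setIP[hC1 hC2]; rewrite inE hC2 stab_addr.
have PC2 : P \subset stab C2 by apply/subsetP => h; rewrite inE => /andP[].
have QC1 : Q \subset stab C1 by apply/subsetP => h; rewrite inE => /andP[].
have MQ : M \subset stab C1 :\: Q.
  apply/subsetP => h /setIP[hC1 hC2]; rewrite !inE hC1 andbT.
  by rewrite negb_and (stab_addr _ hC2) yC2 orbT.
have Q_card : #|Q| = 0 \/ #|M| <= #|Q|.
  have [->|[q qQ]] := set_0Vmem Q; [left; exact: cards0 | right].
  apply: (leq_card_stab qQ); apply/subsetP => h /setIP[hC1 hC2].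
  apply/stabP => x; rewrite !inE => /andP[xC1 yxC2].
  by rewrite stabD // addrA (stab_addr _ hC2).
have := card_offsets_mul_le C2 C1 y; rewrite setIC -/M -/P -/Q => D2.
apply: (card_stab_arith M_gt0 _ _ Q_card (card_offsets_mul_le C1 C2 y) D2).
  by rewrite !subset_leq_card.
by move: (subset_leq_card MQ) (subset_leq_card QC1); rewrite cardsDS //; lia.
Qed.

Definition kneser_weight C := #|C| + #|stab C|.

Lemma stabI_subset_stabU C1 C2 : stab C1 :&: stab C2 \subset stab (C1 :|: C2).
Proof.
apply/subsetP => g /setIP[/stabP C1g /stabP C2g]; apply/stabP => x.
by case/setUP => [/C1g | /C2g] xg; rewrite inE xg ?orbT.
Qed.

Lemma kneser_weightU C1 C2 : C1 != set0 -> C2 != set0 ->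
  minn (kneser_weight C1) (kneser_weight C2) <= kneser_weight (C1 :|: C2).
Proof.
move=> nC1 nC2; rewrite /kneser_weight.
have [C12|/subsetPn[y yC1 yC2]] := boolP (C1 \subset C2).
  by rewrite (setUidPr C12) geq_minr.
have [C21|/subsetPn[x xC2 xC1]] := boolP (C2 \subset C1).
  by rewrite (setUidPl C21) geq_minl.
rewrite leqNgt; apply/negP; rewrite leq_min => /andP[lt1 lt2].
have := subset_leq_card (stabI_subset_stabU C1 C2).
have := cardsUI C1 C2; have := cardsID C1 C2; have := cardsID C2 C1; rewrite (setIC C2).
have := card_stab_lt yC1 yC2; have := card_stab_lt xC2 xC1; rewrite setIC; lia.
Qed.

Lemma kneser_weight_bigcup (I : finType) (P : pred I) (F : I -> {set G}) w :
  (forall i, P i -> F i != set0 /\ w <= kneser_weight (F i)) ->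
  \bigcup_(i | P i) F i != set0 -> w <= kneser_weight (\bigcup_(i | P i) F i).
Proof.
move=> wF; apply/implyP; elim/big_ind: _ => [|X Y /implyP wX /implyP wY|i Pi].
- by rewrite eqxx.
- apply/implyP => nXY; have [X0|nX] := eqVneq X set0.
    by rewrite X0 set0U in nXY *; apply: wY.
  have [Y0|nY] := eqVneq Y set0; first by rewrite Y0 setU0; apply: wX.
  by apply: leq_trans (kneser_weightU nX nY); rewrite leq_min wX ?wY.
- by have [-> ->] := wF i Pi.
Qed.

Definition etransl A B e := A :|: [set (b + e)%R | b in B].
Definition etransr A B e := [set b in B | (b + e)%R \in A].

Lemma card_etrans A B e : #|A| + #|B| <= #|etransl A B e| + #|etransr A B e|.
Proof.
rewrite /etransl -(card_imset B (addIr e)) -(cardsUI A) leq_add2l.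
rewrite -(card_imset (etransr A B e) (addIr e)); apply/subset_leq_card/subsetP.
move=> x /setIP[xA /imsetP[b bB xE]]; rewrite xE in xA *; apply: imset_f.
by rewrite inE bB xA.
Qed.

Lemma sumset_etrans_sub A B e : sumset (etransl A B e) (etransr A B e) \subset sumset A B.
Proof.
apply/subsetP => _ /imset2P[x b' + + ->]; rewrite !inE => /orP[xA | /imsetP[b bB ->]].
  by case/andP => b'B _; apply: imset2_f.
case/andP => b'B b'eA; rewrite addrAC (addrC b) addrAC.
by apply: imset2_f.
Qed.

Lemma kneser_degenerate A B b : b \in B ->
  [set (b' - b)%R | b' in B] \subset stab A -> #|A| + #|B| <= kneser_weight (sumset A B).
Proof.
move=> bB sBA; apply: leq_add; first exact: leq_card_sumsetl bB.
rewrite -(card_imset B (addIr (- b)%R)).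
exact: leq_trans (subset_leq_card sBA) (subset_leq_card (stab_sumsetl A B)).
Qed.

Theorem kneser A B : A != set0 -> B != set0 -> #|A| + #|B| <= kneser_weight (sumset A B).
Proof.
have [n] := ubnP #|B|; elim: n => // n IHn in A B *; rewrite ltnS => leBn nA nB.
have [/exists_inP[b bB sBA] | ] :=
  boolP [exists b in B, [set (b' - b)%R | b' in B] \subset stab A].
  exact: kneser_degenerate bB sBA.
rewrite negb_exists_in => /forall_inP not_periodic.
set E := [set e | (etransr A B e != set0) && (etransr A B e != B)].
have cover : sumset A B = \bigcup_(e in E) sumset (etransl A B e) (etransr A B e).
  apply/eqP; rewrite eqEsubset; apply/andP; split; last first.
    by apply/bigcupsP => e _; apply: sumset_etrans_sub.
  apply/subsetP => _ /imset2P[a b aA bB ->].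
  have /subsetPn[_ /imsetP[b' b'B ->] /stabPn[a' a'A a'b'_notA]] := not_periodic b bB.
  apply/bigcupP; exists (a' - b)%R; last first.
    by apply: imset2_f; rewrite !inE ?aA // bB addrC subrK.
  rewrite inE; apply/andP; split.
    by apply/set0Pn; exists b; rewrite inE bB addrC subrK.
  apply/eqP => eqB; move: b'B; rewrite -eqB inE => /andP[_].
  by rewrite addrCA; apply/negP.
rewrite cover; apply: kneser_weight_bigcup => [e|]; last by rewrite -cover sumset_neq0.
rewrite inE => /andP[ne0 neB].
have nA' : etransl A B e != set0.
  by case/set0Pn: nA => a aA; apply/set0Pn; exists a; rewrite inE aA.
split; first exact: sumset_neq0.
apply: leq_trans (card_etrans A B e) (IHn _ _ _ nA' ne0).
apply: leq_trans leBn; apply: proper_card; rewrite properEneq neB.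
by apply/subsetP => x; rewrite inE => /andP[].
Qed.

Lemma card_diffset_ge A : A != set0 ->
  #|stab (diffset A A)| * (2 * ceil_div #|A| #|stab (diffset A A)| - 1) <= #|diffset A A|.
Proof.
move=> nA; set C := diffset A A; set H := stab C.
have H0 : 0%R \in H := stab0 C.
set X := sumset A H; set Y := sumset [set (- a)%R | a in A] H.
have XY : sumset X Y = C.
  apply/eqP; rewrite eqEsubset; apply/andP; split; apply/subsetP.
    move=> _ /imset2P[_ _ /imset2P[a h aA hH ->] /imset2P[_ h' /imsetP[a' a'A ->] h'H ->] ->].
    by rewrite addrACA; apply/(stabP _ _ (stabD hH h'H)); apply: imset2_f.
  move=> _ /imset2P[a a' aA a'A ->]; rewrite -[a]addr0 -[(- a')%R]addr0.
  by apply: imset2_f; apply: imset2_f; rewrite ?imset_f.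
have nX : X != set0 by rewrite sumset_neq0 //; apply/set0Pn; exists 0%R.
have nY : Y != set0.
  rewrite sumset_neq0 //; last by apply/set0Pn; exists 0%R.
  by case/set0Pn: nA => a aA; apply/set0Pn; exists (- a)%R; apply: imset_f.
have H_gt0 : 0 < #|H| by apply/card_gt0P; exists 0%R.
have HX : H \subset stab X := subset_trans (stab_stab C) (stab_sumsetr A H).
have HY : H \subset stab Y := subset_trans (stab_stab C) (stab_sumsetr _ H).
have cardX := ceil_div_mul_leq H_gt0 (dvdn_stab HX) (leq_card_sumsetl A H0).
have cardY := ceil_div_mul_leq H_gt0 (dvdn_stab HY) (leq_card_sumsetl _ H0).
rewrite card_imset in cardY; last exact: oppr_inj.
have := kneser nX nY; rewrite XY /kneser_weight -/H.
rewrite mulnBr muln1 mulnCA [#|H| * _]mulnC => K.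
by have := leq_trans (leq_add cardX cardY) K; move: (_ * #|H|) => p; lia.
Qed.

End Kneser.

Section CyclicUpperBound.
Variables (G : finZmodType) (g : G) (d m : nat).
Hypothesis g_order : forall a b, (g *+ a == g *+ b)%R = (a == b %[mod d * m]).

Definition block k := sumset (progression (g *+ m)%R d) (progression g k).

Lemma card_block_ge k : 0 < k <= m -> d * k <= #|block k|.
Proof.
case/andP=> k_gt0 km; have m_gt0 : 0 < m := leq_trans k_gt0 km.
pose f (p : 'I_d * 'I_k) := (g *+ (p.1 * m + p.2))%R.
have f_inj : injective f.
  have lt_dm (q : 'I_d) (i : 'I_k) : q * m + i < d * m.
    by have := ltn_ord q; have := ltn_ord i; nia.
  move=> [q i] [q' i'] /eqP; rewrite g_order /= !modn_small // => /eqP eq_qi.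
  have [im i'm] : i < m /\ i' < m by split; apply: leq_trans km.
  have := congr1 (modn^~ m) eq_qi; have := congr1 (divn^~ m) eq_qi.
  rewrite /= !modnMDl !divnMDl // !divn_small // !modn_small // !addn0.
  by move=> /val_inj -> /val_inj ->.
have -> : d * k = #|[set: 'I_d * 'I_k]| by rewrite cardsT card_prod !card_ord.
rewrite -(card_imset _ f_inj); apply/subset_leq_card/subsetP => _ /imsetP[[q i] _ ->].
by rewrite /f mulrnDr mulnC mulrnA; apply: imset2_f; apply: imset_f.
Qed.

Lemma card_diffset_block_le k : #|diffset (block k) (block k)| <= d * (2 * k - 1).
Proof.
have Pd0 : ((g *+ m) *+ d = 0)%R.
  by rewrite -mulrnA -(mulr0n g); apply/eqP; rewrite g_order mulnC modnn mod0n.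
apply: leq_trans (subset_leq_card (diffset_sumset _ _)) _.
apply: leq_trans (card_sumset_le _ _) _; apply: leq_mul.
  apply: leq_trans (card_progression_le (g *+ m)%R d); apply: subset_leq_card.
  exact: diffset_progression_cyclic.
apply: leq_trans (subset_leq_card (diffset_progression g k)) _.
by apply: leq_trans (card_sumset_le _ _) _; rewrite cards1 muln1 card_progression_le.
Qed.

End CyclicUpperBound.

Lemma Zp1_mulrn_eq n a b :
  ((inZp 1 : 'I_n.+1) *+ a == inZp 1 *+ b)%R = (a == b %[mod n.+1]).
Proof. by rewrite !Zp_mulrn -val_eqE /= !modnMml !mul1n. Qed.

Lemma rho_minus_Zp_le n r d : 0 < r <= n.+1 -> d %| n.+1 ->
  rho_minus [the finZmodType of 'I_n.+1] r <= d * (2 * ceil_div r d - 1).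
Proof.
case/andP=> r_gt0 rN dN; have d_gt0 := dvdn_gt0 (ltn0Sn n) dN.
set k := ceil_div r d; set m := n.+1 %/ d.
have dm : d * m = n.+1 by rewrite mulnC divnK.
have k_gt0 : 0 < k by rewrite lt0n -leqn0 /k leq_ceil_divLR // mul0n -ltnNge.
have km : k <= m by rewrite /k leq_ceil_divLR // mulnC dm.
have g_order a b := Zp1_mulrn_eq n a b; rewrite -dm in g_order.
set S := block (inZp 1 : 'I_n.+1) d m k.
have : 0 < 'C(#|S|, r).
  rewrite bin_gt0 (leq_trans _ (card_block_ge g_order (introT andP (conj k_gt0 km)))) //.
  by rewrite mulnC -leq_ceil_divLR.
rewrite -cards_draws => /card_gt0P[A]; rewrite inE => /andP[AS cardA].
rewrite /rho_minus -minEnat -leEnat; apply: bigmin_inf cardA _; rewrite leEnat.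
exact: leq_trans (subset_leq_card (diffsetS AS)) (card_diffset_block_le g_order k).
Qed.

Theorem mainTheorem2 (N : nat) (r : nat) :
  0 < N -> 1 <= r <= N ->
  rho_minus [the finZmodType of 'I_N.-1.+1] r =
  \big[minn/N]_(d <- divisors N) (d * (2 * ceil_div r d - 1)).
Proof.
case: N => // n _ rN /=; apply/eqP; rewrite eqn_leq /rho_minus -minEnat -!leEnat.
apply/andP; split.
  rewrite big_seq; apply: le_bigmin => [|d]; first by rewrite -[n.+1]card_ord bigmin_le_id.
  by rewrite -dvdn_divisors // => /(rho_minus_Zp_le rN).
apply: le_bigmin => [|A /eqP cardA]; first by rewrite card_ord bigmin_le_id.
have nA : A != set0 by rewrite -card_gt0 cardA; case/andP: rN.
have := card_diffset_ge nA; rewrite cardA => bound.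
apply: (@bigmin_inf_seq _ _ _ _ _ #|stab (diffset A A)|) => //.
by rewrite -dvdn_divisors // -[n.+1]card_ord dvdn_stab_card.
Qed.
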